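(* A permutation $\varpi\in S_n$ is amenable if and only if $\varpi$ is vexillary, i.e. $2143$-avoiding.
   Context: $S_n$ is the symmetric group in one-line notation; $\ell$ denotes length (number of inversions). A permutation is $v$-avoiding if it contains no subword with the same relative order as $v$. The code of $\varpi$ is $\gamma_i:=\#\{j>i\mid\varpi_j<\varpi_i\}$, and $\varpi$ is dominant if its code is weakly decreasing (equivalently, $\varpi$ is $132$-avoiding). A (right) modification of $\varpi$ is $\varpi\omega$ with $\omega\in S_n$ $231$-avoiding and $\ell(\varpi\omega)=\ell(\varpi)-\ell(\omega)$. A permutation is amenable if it is a modification of a dominant permutation. *)

(* Permutations of {0,...,n-1} = 'I_n, as {perm 'I_n};
   one-line notation of w is (w 0, ..., w (n-1)). *)
From mathcomp Require Import all_boot all_fingroup.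
Set Implicit Arguments. Unset Strict Implicit. Unset Printing Implicit Defensive.

Definition perm_len (n : nat) (w : {perm 'I_n}) : nat :=
  #|[set p : 'I_n * 'I_n | (p.1 < p.2) && (w p.2 < w p.1)]|.

(* w contains the pattern v (given in one-line notation as a sequence of
   distinct naturals; only relative order matters) *)
Definition contains_pattern (n : nat) (w : {perm 'I_n}) (v : seq nat) : Prop :=
  exists f : 'I_(size v) -> 'I_n,
    (forall a b : 'I_(size v), a < b -> f a < f b) /\
    (forall a b : 'I_(size v), (w (f a) < w (f b)) = (nth 0 v a < nth 0 v b)).

Definition avoids (n : nat) (w : {perm 'I_n}) (v : seq nat) : Prop :=
  ~ contains_pattern w v.

Definition perm_code (n : nat) (w : {perm 'I_n}) (i : 'I_n) : nat :=
  #|[set j : 'I_n | (i < j) && (w j < w i)]|.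

Definition dominant (n : nat) (w : {perm 'I_n}) : Prop :=
  forall i j : 'I_n, i <= j -> perm_code w j <= perm_code w i.

(* product in one-line notation: (w om)(i) = w (om i).  In mathcomp,
   (s * t) x = t (s x), so w om is written om * w. *)
Definition pmul (n : nat) (w om : {perm 'I_n}) : {perm 'I_n} := (om * w)%g.

(* right modification of w : w om with om 231-avoiding and
   l(w om) = l(w) - l(om)  (stated additively, in nat) *)
Definition is_modification (n : nat) (w u : {perm 'I_n}) : Prop :=
  exists om : {perm 'I_n},
    avoids om [:: 2; 3; 1] /\
    perm_len (pmul w om) + perm_len om = perm_len w /\
    u = pmul w om.

Definition amenable (n : nat) (u : {perm 'I_n}) : Prop :=
  exists w : {perm 'I_n}, dominant w /\ is_modification w u.

Definition vexillary (n : nat) (w : {perm 'I_n}) : Prop :=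
  avoids w [:: 2; 1; 4; 3].

From mathcomp Require Import all_boot all_fingroup.
From mathcomp Require Import zify.
Set Implicit Arguments. Unset Strict Implicit. Unset Printing Implicit Defensive.

(* If u = w om with w dominant and l(u) + l(om) = l(w), the identity
   l(w) + 2 #(Inv om :&: Inv u) = l(u) + l(om) shows that om and u share no
   inversion.  Hence, at an occurrence i < j < k < l of 2143 in u, om keeps
   (i, j) and (k, l) in order, and comparing om i with om k exhibits either a
   132 in w (at om i < om k < om l) or a 231 in om (at i < j < k).
   Conversely, for vexillary u, declare i < j with u i < u j "flipped" when
   u j is the 1 of a 132 in u, or u i u j u k is a 132 for some k.  Flipped
   pairs are closed under transitivity and co-transitivity, so they form the
   inversion set of a permutation om; they are non-inversions of u, which gives
   the length identity; 2143-avoidance makes om 231-avoiding, and u om^-1 has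
   no 132, i.e. is dominant. *)

Lemma val_perm_eq n (s : {perm 'I_n}) (i j : 'I_n) :
  ((s i : nat) == s j) = ((i : nat) == j).
Proof. by rewrite !val_eqE (inj_eq perm_inj). Qed.

Lemma pmulE n (w om : {perm 'I_n}) (i : 'I_n) : pmul w om i = w (om i).
Proof. exact: permM. Qed.

Lemma contains231P n (o : {perm 'I_n}) :
  contains_pattern o [:: 2; 3; 1] <->
  exists i j k : 'I_n, [/\ i < j, j < k, o k < o i & o i < o j].
Proof.
split=> [[f [f_incr f_pat]] | [i [j [k [ij jk oki oij]]]]].
  pose x a (a3 : a < 3) := f (Ordinal a3).
  exists (x 0 isT), (x 1 isT), (x 2 isT); split.
  - exact: (f_incr (Ordinal (isT : 0 < 3)) (Ordinal (isT : 1 < 3))).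
  - exact: (f_incr (Ordinal (isT : 1 < 3)) (Ordinal (isT : 2 < 3))).
  - by rewrite f_pat.
  - by rewrite f_pat.
exists (fun a : 'I_3 => nth i [:: i; j; k] a); split.
  by move=> [[|[|[|a]]] ?] [[|[|[|b]]] ?] //=; lia.
by move=> [[|[|[|a]]] ?] [[|[|[|b]]] ?] //=; lia.
Qed.

Lemma contains2143P n (o : {perm 'I_n}) :
  contains_pattern o [:: 2; 1; 4; 3] <->
  exists i j k l : 'I_n,
    [/\ i < j, j < k, k < l & [/\ o j < o i, o i < o l & o l < o k]].
Proof.
split=> [[f [f_incr f_pat]] | [i [j [k [l [ij jk kl [ji il lk]]]]]]].
  pose x a (a4 : a < 4) := f (Ordinal a4).
  exists (x 0 isT), (x 1 isT), (x 2 isT), (x 3 isT); split; last by rewrite !f_pat.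
  - exact: (f_incr (Ordinal (isT : 0 < 4)) (Ordinal (isT : 1 < 4))).
  - exact: (f_incr (Ordinal (isT : 1 < 4)) (Ordinal (isT : 2 < 4))).
  - exact: (f_incr (Ordinal (isT : 2 < 4)) (Ordinal (isT : 3 < 4))).
exists (fun a : 'I_4 => nth i [:: i; j; k; l] a); split.
  by move=> [[|[|[|[|a]]]] ?] [[|[|[|[|b]]]] ?] //=; lia.
by move=> [[|[|[|[|a]]]] ?] [[|[|[|[|b]]]] ?] //=; lia.
Qed.

Lemma dominantP n (w : {perm 'I_n}) :
  dominant w <->
  (forall i j k : 'I_n, i < j -> j < k -> w i < w k -> w k < w j -> False).
Proof.
split=> [w_dom i j k ij jk ik kj | no132 i j ij].
  (* With i' the last position before j below w k, every inversion (i', m)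
     is also an inversion (j, m), while (j, k) is an extra one. *)
  pose P := [pred p : 'I_n | (p < j) && (w p < w k)].
  have [i' /andP[i'j i'k] i'_last] := @arg_maxnP _ i P val (introT andP (conj ij ik)).
  have := w_dom i' j (ltnW i'j); apply/negP; rewrite -ltnNge; apply: proper_card.
  apply/properP; split.
    apply/subsetP => m; rewrite !inE => /andP[i'm wm].
    have jm : j < m.
      case: (ltngtP j m) => // [mj | /val_inj jm]; last by rewrite -jm in wm; lia.
      by have := i'_last m (introT andP (conj mj (ltn_trans wm i'k))) => /=; lia.
    by rewrite jm /=; lia.
  by exists k; rewrite !inE ?jk ?kj //=; apply/negP => /andP[_]; lia.
move: ij; rewrite leq_eqVlt => /orP[/eqP/val_inj <- // | ij].
apply: subset_leq_card; apply/subsetP => m; rewrite !inE.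
case/andP=> jm wm; rewrite (ltn_trans ij jm) /=.
case: (ltngtP (w j) (w i)) => [wji | wij | /val_inj/perm_inj eij].
- exact: ltn_trans wm wji.
- case: (ltngtP (w m) (w i)) => [// | wim | /val_inj/perm_inj emi].
    by case: (no132 i j m ij jm wim wm).
  by rewrite emi in jm; lia.
- by rewrite eij ltnn in ij.
Qed.

Definition inversions n (s : {perm 'I_n}) : {set 'I_n * 'I_n} :=
  [set p : 'I_n * 'I_n | (p.1 < p.2) && (s p.2 < s p.1)].

Lemma perm_len_pmul n (w om : {perm 'I_n}) :
  perm_len w + 2 * #|inversions om :&: inversions (pmul w om)|
  = perm_len (pmul w om) + perm_len om.
Proof.
set u := pmul w om; have uE := pmulE w om.
have val_eq a b := (val_perm_eq om a b, val_perm_eq u a b).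
(* (x, y) |-> (om^-1 x, om^-1 y) identifies the inversions of w with the
   pairs whose order is reversed by exactly one of om and u. *)
have len_w : perm_len w =
    #|inversions u :\: inversions om| + #|inversions om :\: inversions u|.
  pose T := [set p : 'I_n * 'I_n | (om p.1 < om p.2) && (u p.2 < u p.1)].
  have om2_inj : injective (fun p : 'I_n * 'I_n => (om p.1, om p.2)).
    by move=> [a b] [c d] [/perm_inj -> /perm_inj ->].
  have swap_inj : injective (fun p : 'I_n * 'I_n => (p.2, p.1)).
    by move=> [a b] [c d] [-> ->].
  have -> : perm_len w = #|T|.
    rewrite /perm_len -(card_preimset _ om2_inj).
    by apply: eq_card => p; rewrite !inE /= !uE.
  rewrite -(cardsID [set p : 'I_n * 'I_n | p.1 < p.2] T); congr (_ + _).
    by apply: eq_card => -[a b]; rewrite !inE /=; case: (val_eq a b); lia.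
  rewrite -(card_preimset _ swap_inj); apply: eq_card => -[a b]; rewrite !inE /=.
  by case: (val_eq a b); lia.
have len_u : perm_len u =
    #|inversions u :&: inversions om| + #|inversions u :\: inversions om|.
  exact/esym/cardsID.
have len_om : perm_len om =
    #|inversions om :&: inversions u| + #|inversions om :\: inversions u|.
  exact/esym/cardsID.
rewrite len_w len_u len_om setIC; lia.
Qed.

Lemma modification_lenP n (w om : {perm 'I_n}) :
  perm_len (pmul w om) + perm_len om = perm_len w <->
  (forall i j : 'I_n, i < j -> om j < om i -> pmul w om i < pmul w om j).
Proof.
rewrite -perm_len_pmul; split=> [common0 i j ij omji | no_common].
  have /eqP : #|inversions om :&: inversions (pmul w om)| = 0 by lia.
  rewrite cards_eq0 => /eqP/setP/(_ (i, j)); rewrite !inE /= ij omji /= => /negbT.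
  by have := val_perm_eq (pmul w om) i j; lia.
suff -> : inversions om :&: inversions (pmul w om) = set0 by rewrite cards0; lia.
apply/setP => -[i j]; rewrite !inE /=; apply/negP => /andP[/andP[ij omji] /andP[_]].
by have := no_common i j ij omji; lia.
Qed.

Section RankPermutation.
Variables (n : nat) (r : rel 'I_n).
Hypotheses (r_irr : irreflexive r) (r_trans : transitive r)
  (r_total : forall i j, i != j -> r i j || r j i).

Let rank (i : 'I_n) := #|[set j | r j i]|.

Let rank_lt i : rank i < n.
Proof.
rewrite -[n]card_ord -cardsT; apply: proper_card; apply/properP.
by split; [exact: subsetT | exists i; rewrite ?inE ?r_irr].
Qed.

Let rank_mono i j : r i j -> rank i < rank j.
Proof.
move=> rij; apply: proper_card; apply/properP; split.
  by apply/subsetP => k; rewrite !inE => /r_trans; apply.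
by exists i; rewrite !inE ?r_irr.
Qed.

Lemma perm_of_total_order :
  exists om : {perm 'I_n}, forall i j, (om i < om j) = r i j.
Proof.
have rank_inj : injective (fun i => Ordinal (rank_lt i)).
  move=> i j /(congr1 val) /= eq_rank; apply/eqP; apply: contraT => /r_total.
  by case/orP => /rank_mono; rewrite eq_rank ltnn.
exists (perm rank_inj) => i j; rewrite !permE /=.
apply/idP/idP => [lt_ij | /rank_mono //].
have [eij | /r_total] := eqVneq i j; first by rewrite eij ltnn in lt_ij.
by case/orP => // /rank_mono; lia.
Qed.

End RankPermutation.

Section InversionSets.
Variables (n : nat) (E : rel 'I_n).
Hypothesis E_trans :
  forall i j k : 'I_n, i < j -> j < k -> E i j -> E j k -> E i k.
Hypothesis E_cotrans :
  forall i j k : 'I_n, i < j -> j < k -> E i k -> E i j || E j k.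

Let before (i j : 'I_n) := (i < j) && ~~ E i j || (j < i) && E j i.

Let before_trans : transitive before.
Proof.
move=> j i k; rewrite /before.
case: (ltngtP i j) => ij; case: (ltngtP j k) => jk; case: (ltngtP i k) => ik //=.
all: rewrite ?orbF; try (exfalso; lia).
- by move=> /negPf nij /negPf njk; apply/negP => /(E_cotrans ij jk); rewrite nij njk.
- by move=> /negP nij ekj; apply/negP => eik; apply: nij; apply: E_trans ik jk eik ekj.
- by move=> /negPf nij /(E_cotrans ik ij); rewrite nij orbF.
- by rewrite (val_inj ik) => /negPf ->.
- by move=> eji /negP njk; apply/negP => eik; apply: njk; apply: E_trans ij ik eji eik.
- by move=> /(E_cotrans jk ik); case: (E j k).
- by rewrite (val_inj ik) => ->.
- by move=> eji ekj; apply: E_trans jk ij ekj eji.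
Qed.

Lemma perm_of_inversion_set :
  exists om : {perm 'I_n}, forall i j : 'I_n, i < j -> (om j < om i) = E i j.
Proof.
have before_irr : irreflexive before by move=> i; rewrite /before ltnn.
have before_total i j : i != j -> before i j || before j i.
  rewrite /before; case: (ltngtP i j) => [_ _ | _ _ | /val_inj -> /eqP //].
    by case: (E i j).
  by case: (E j i).
have [om om_before] := perm_of_total_order before_irr before_trans before_total.
by exists om => i j ij; rewrite om_before /before ij ltnNge (ltnW ij).
Qed.

End InversionSets.

Section VexillaryModification.
Variables (n : nat) (u : {perm 'I_n}).

Definition starts132 (j : 'I_n) := [exists l : 'I_n, [exists k : 'I_n,
  [&& j < l, l < k, u j < u k & u k < u l]]].

Definition flipped (i j : 'I_n) := [&& i < j, u i < u j &
  starts132 j || [exists k : 'I_n, [&& j < k, u i < u k & u k < u j]]].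

Lemma starts132P (j : 'I_n) :
  reflect (exists l k : 'I_n, [/\ j < l, l < k, u j < u k & u k < u l])
          (starts132 j).
Proof.
apply: (iffP existsP) => [[l /existsP[k /and4P[]]] | [l [k [jl lk ujk ukl]]]].
  by exists l, k.
by exists l; apply/existsP; exists k; apply/and4P.
Qed.

Lemma flippedP (i j : 'I_n) :
  reflect [/\ i < j, u i < u j &
             starts132 j \/ exists k : 'I_n, [/\ j < k, u i < u k & u k < u j]]
          (flipped i j).
Proof.
apply: (iffP and3P) => -[ij uij ext]; split=> //.
  by case/orP: ext => [|/existsP[k /and3P[]]]; [left | right; exists k].
apply/orP; case: ext => [|[k [jk uik ukj]]]; first by left.
by right; apply/existsP; exists k; apply/and3P.
Qed.

Lemma flipped_trans (i j k : 'I_n) : flipped i j -> flipped j k -> flipped i k.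
Proof.
move=> /flippedP[ij uij _] /flippedP[jk ujk [start_k | [m [km ujm umk]]]].
  by apply/flippedP; split=> //; [lia | lia | left].
by apply/flippedP; split; [lia | lia | right; exists m; split=> //; lia].
Qed.

Lemma flipped_cotrans (i j k : 'I_n) :
  i < j -> j < k -> flipped i k -> flipped i j || flipped j k.
Proof.
move=> ij jk /flippedP[_ uik ext_ik].
case: (ltngtP (u i) (u j)) => [uij | uji | /val_inj/perm_inj eij]; last first.
- by rewrite eij ltnn in ij.
- apply/orP; right; apply/flippedP; split=> //; first lia.
  case: ext_ik => [|[m [km uim umk]]]; first by left.
  by right; exists m; split=> //; lia.
case: (ltngtP (u j) (u k)) => [ujk | ukj | /val_inj/perm_inj ejk]; last first.
- by rewrite ejk ltnn in jk.
- by apply/orP; left; apply/flippedP; split=> //; right; exists k.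
case: ext_ik => [start_k | [m [km uim umk]]].
  by apply/orP; right; apply/flippedP; split=> //; left.
case: (ltngtP (u m) (u j)) => [umj | ujm | /val_inj/perm_inj emj].
- by apply/orP; left; apply/flippedP; split=> //; right; exists m; split=> //; lia.
- by apply/orP; right; apply/flippedP; split=> //; right; exists m.
- by rewrite emj in km; lia.
Qed.

Hypothesis u_vex : avoids u [:: 2; 1; 4; 3].

Lemma flipped_231 (i j k : 'I_n) :
  i < j -> j < k -> flipped i k -> flipped j k -> flipped i j.
Proof.
move=> ij jk /flippedP[_ uik ext_ik] /flippedP[_ ujk ext_jk].
case: (ltngtP (u i) (u j)) => [uij | uji | /val_inj/perm_inj eij]; last first.
- by rewrite eij ltnn in ij.
- case: u_vex; apply/contains2143P.
  case: ext_ik => [/starts132P[l [m [kl lm ukm uml]]] | [m [km uim umk]]].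
    by exists i, j, l, m; split; [| lia | lia | split=> //; lia].
  by exists i, j, k, m.
apply/flippedP; split=> //; left; apply/starts132P.
case: ext_jk => [/starts132P[l [m [kl lm ukm uml]]] | [m [km ujm umk]]].
  by exists l, m; split=> //; lia.
by exists k, m.
Qed.

Variable om : {perm 'I_n}.
Hypothesis om_inversions :
  forall i j : 'I_n, i < j -> (om j < om i) = flipped i j.

Lemma om_avoids231 : avoids om [:: 2; 3; 1].
Proof.
case/contains231P => [i [j [k [ij jk omki omij]]]].
have flipped_ik : flipped i k by rewrite -om_inversions //; lia.
have flipped_jk : flipped j k by rewrite -om_inversions //; lia.
by have := flipped_231 ij jk flipped_ik flipped_jk; rewrite -om_inversions //; lia.
Qed.

Lemma om_order_no132 (a b c : 'I_n) :
  om a < om b -> om b < om c -> u a < u c -> u c < u b -> False.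
Proof.
move=> omab ombc uac ucb.
have flipped_u (x y : 'I_n) : om x < om y -> y < x -> u y < u x.
  by move=> omxy yx; move: omxy; rewrite om_inversions // => /flippedP[].
case: (ltngtP a b) => [ab | ba | /val_inj eab]; last first.
- by rewrite eab ltnn in omab.
- by have := flipped_u a b omab ba; lia.
have /negP[] : ~~ flipped a b by rewrite -om_inversions // -leqNgt ltnW.
case: (ltngtP b c) => [bc | cb | /val_inj ebc]; last first.
- by rewrite ebc ltnn in ombc.
- have := ombc; rewrite om_inversions // => /flippedP[_ _ ext_cb].
  case: (ltngtP a c) => [ac | ca | /val_inj eac]; last first.
  + by rewrite eac in uac; lia.
  + by have := flipped_u a c (ltn_trans omab ombc) ca; lia.
  apply/flippedP; split=> //; first lia.
  case: ext_cb => [|[m [bm ucm umb]]]; first by left.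
  by right; exists m; split=> //; lia.
by apply/flippedP; split=> //; [lia | right; exists c].
Qed.

Lemma dominant_om_inv_mul : dominant (om^-1 * u)%g.
Proof.
apply/dominantP => x y z xy yz; rewrite !permM.
by apply: om_order_no132; rewrite !permKV.
Qed.

Lemma is_modification_om_inv_mul : is_modification (om^-1 * u)%g u.
Proof.
have pmulK : pmul (om^-1 * u)%g om = u by rewrite /pmul mulKVg.
exists om; split; first exact: om_avoids231.
split; last by rewrite pmulK.
by apply/modification_lenP; rewrite pmulK => i j ij; rewrite om_inversions // => /flippedP[].
Qed.

End VexillaryModification.

Lemma vexillary_amenable n (u : {perm 'I_n}) :
  avoids u [:: 2; 1; 4; 3] -> amenable u.
Proof.
move=> u_vex.
have [om om_inversions] :=
  perm_of_inversion_set (fun i j k _ _ => @flipped_trans n u i j k) (@flipped_cotrans n u).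
exists (om^-1 * u)%g; split; first exact: dominant_om_inv_mul.
exact: is_modification_om_inv_mul.
Qed.

Lemma amenable_vexillary n (u : {perm 'I_n}) :
  amenable u -> avoids u [:: 2; 1; 4; 3].
Proof.
move=> [w [/dominantP w_no132 [om [om_no231 [/modification_lenP no_common ->]]]]].
case/contains2143P => [i [j [k [l [ij jk kl]]]]]; rewrite !pmulE => -[uji uil ulk].
have om_lt (x y : 'I_n) : x < y -> w (om y) < w (om x) -> om x < om y.
  move=> xy wyx; have := no_common x y xy; rewrite !pmulE.
  by have := val_perm_eq om x y; lia.
have omij := om_lt i j ij uji.
have omkl := om_lt k l kl ulk.
case: (ltngtP (om i) (om k)) => [omik | omki | /val_inj/perm_inj eik].
- exact: w_no132 omik omkl uil ulk.
- by apply: om_no231; apply/contains231P; exists i, j, k; split=> //; lia.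
- by rewrite eik in ij; lia.
Qed.

Theorem theorem2 (n : nat) (w : {perm 'I_n}) :
  amenable w <-> avoids w [:: 2; 1; 4; 3].
Proof. by split; [exact: amenable_vexillary | exact: vexillary_amenable]. Qed.
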